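(* Algorithm Exact Silent Count solves the $k$-ribbon problem on a line of $n$ agents, for any choice of starting agent, within $3n$ rounds, using $6n$ message bits in total and $2\log n+\log k+O(1)$ bits of memory per agent.
   Context: Message passing model (1D): a line graph of $n$ agents, synchronous rounds, reliable messages between neighbors each round. All agents run the same algorithm, have no knowledge of their global position or of $n$, share a common sense of direction, and endpoints know they are endpoints. Initially all agents but one arbitrary starting agent are asleep; a sleeping agent wakes upon receiving a message. The $k$-ribbon problem: every agent outputs a color in $\{1,\dots,k\}$ such that each color class is contiguous, colors increase from left to right, and the sizes of any two color classes differ by at most $1$. Algorithm Exact Silent Count: the starting agent sends the single bit $0$ to the left and the bit $1$ to the right (if it is an endpoint, it sends both bits in one 2-bit message to its unique neighbor). Every agent forwards each received bit in the same direction, except endpoints, which send it back. The $d$-side endpoint sets $n_d\leftarrow 0$ on waking and never changes it. Any other agent, the first time it receives a message from direction $d$, sets $n_{\bar d}\leftarrow 0$ (where $\bar d$ is the opposite direction) and increments $n_{\bar d}$ every round until it receives a message from direction $\bar d$, at which point it stops and sets $n_{\bar d}\leftarrow n_{\bar d}/2$. When an agent has final values of $n_\ell$ and $n_r$ and has already sent $0$ to the left and $1$ to the right, it decides the color its position receives in the $k$-ribbon (determined by $n_\ell$, $n_r$, $k$) and halts. *)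

From mathcomp Require Import all_boot.

Set Implicit Arguments.
Unset Strict Implicit.
Unset Printing Implicit Defensive.

(* The k-ribbon problem.  Agents are the positions 0 .. n-1 (left to   *)
(* right); [c i] is the color output by agent i.                       *)

Definition class_size (n : nat) (c : nat -> nat) (a : nat) : nat :=
  count (fun i => c i == a) (iota 0 n).

Definition is_k_ribbon (n k : nat) (c : nat -> nat) : Prop :=
  (forall i, i < n -> 1 <= c i <= k) /\
  (forall i j l, i <= j -> j <= l -> l < n -> c i = c l -> c j = c i) /\
  (forall i j, i <= j -> j < n -> c i <= c j) /\
  (forall a b, 1 <= a <= k -> 1 <= b <= k ->
     class_size n c a <= (class_size n c b).+1).

(* The color of the position with [nl] agents on its left and [nr]
   agents on its right, in the balanced k-ribbon of the line of
   nl + nr + 1 agents (the decision rule of the algorithm). *)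
Definition ribbon_color (k nl nr : nat) : nat := (nl * k) %/ (nl + nr + 1) + 1.

(* A counter n_d: not started, running (current value, and the bits of
   the message that started it), or final (already halved). *)
Inductive counter : Type :=
| Idle
| Run of nat & seq bool
| Fin of nat.

Record astate : Type := AState {
  awake  : bool;
  halted : bool;
  cnt_l  : counter;
  cnt_r  : counter;
  sent_l : bool;           (* has sent 0 to the left  *)
  sent_r : bool;           (* has sent 1 to the right *)
  output : option nat
}.

Definition asleep : astate := AState false false Idle Idle false false None.

Definition tick (c : counter) : counter :=
  if c is Run v B then Run v.+1 B else c.

Definition stop_if (m : seq bool) (c : counter) : counter :=
  if c is Run v B then (if has (fun x => x \in B) m then Fin v./2 else c) else c.

Definition start_if (m : seq bool) (c : counter) : counter :=
  if c is Idle then (if m != [::] then Run 0 m else c) else c.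

Definition is_fin (c : counter) : option nat := if c is Fin v then Some v else None.

Definition try_halt (k : nat) (x : astate) : astate :=
  match is_fin (cnt_l x), is_fin (cnt_r x) with
  | Some p, Some q =>
      if sent_l x && sent_r x && ~~ halted x then
        AState (awake x) true (cnt_l x) (cnt_r x) (sent_l x) (sent_r x)
               (Some (ribbon_color k p q))
      else x
  | _, _ => x
  end.

(* Waking up: the d-side endpoint sets n_d <- 0 (and, having no
   d-neighbour, trivially satisfies the sending condition on side d). *)
Definition wake (isL isR : bool) (x : astate) : astate :=
  if awake x then x else
  AState true false (if isL then Fin 0 else Idle) (if isR then Fin 0 else Idle)
         isL isR None.

(* One round of a (non-starting-round) agent that knows only whether it
   is the left / right endpoint.  [a] = bits received from the left
   neighbour, [b] = bits received from the right neighbour. *)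
Definition step_agent (isL isR : bool) (k : nat) (x : astate)
    (a b : seq bool) : astate * seq bool * seq bool :=
  if halted x then (x, [::], [::]) else
  if ~~ awake x && (a == [::]) && (b == [::]) then (x, [::], [::]) else
  let x1 := wake isL isR x in
  let cl := tick (cnt_l x1) in
  let cr := tick (cnt_r x1) in
  let '(cl', cr', toL, toR) :=
    if isL && isR then (cl, cr, [::], [::])
    else if isL then
      (cl, start_if b (stop_if b cr), [::], b)
    else if isR then
      (start_if a (stop_if a cl), cr, a, [::])
    else
      (start_if b (stop_if a cl), start_if a (stop_if b cr), b, a) in
  let x2 := AState true false cl' cr'
                   (sent_l x1 || (false \in toL)) (sent_r x1 || (true \in toR))
                   None in
  (try_halt k x2, toL, toR).

Definition start_agent (isL isR : bool) (k : nat) : astate * seq bool * seq bool :=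
  let '(cl, cr, toL, toR) :=
    if isL && isR then (Fin 0, Fin 0, [::], [::])
    else if isL then (Fin 0, Run 0 [:: false; true], [::], [:: false; true])
    else if isR then (Run 0 [:: false; true], Fin 0, [:: false; true], [::])
    else (Idle, Idle, [:: false], [:: true]) in
  (try_halt k (AState true false cl cr true true None), toL, toR).

Record config : Type := Config {
  st   : nat -> astate;
  msgL : nat -> seq bool;   (* bits sent by agent i to agent i-1 *)
  msgR : nat -> seq bool    (* bits sent by agent i to agent i+1 *)
}.

Definition init_config (n k s : nat) : config :=
  let r := start_agent (s == 0) (s == n.-1) k in
  Config (fun i => if i == s then r.1.1 else asleep)
         (fun i => if i == s then r.1.2 else [::])
         (fun i => if i == s then r.2 else [::]).

Definition next_config (n k : nat) (c : config) : config :=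
  let fromL i := if i is j.+1 then msgR c j else [::] in
  let fromR i := if i.+1 < n then msgL c i.+1 else [::] in
  let r i := step_agent (i == 0) (i == n.-1) k (st c i) (fromL i) (fromR i) in
  Config (fun i => (r i).1.1) (fun i => (r i).1.2) (fun i => (r i).2).

(* configuration at the end of round r (round 1 = the starting agent's
   initial sending; round 0 = everybody asleep) *)
Fixpoint after_round (n k s r : nat) : config :=
  match r with
  | 0 => Config (fun _ => asleep) (fun _ => [::]) (fun _ => [::])
  | 1 => init_config n k s
  | r'.+1 => next_config n k (after_round n k s r')
  end.

Definition bits_in_round (n k s r : nat) : nat :=
  \sum_(i < n) (size (msgL (after_round n k s r) i) + size (msgR (after_round n k s r) i)).

(* Memory (in bits) used by a local state: one bit per boolean flag,   *)
(* binary length for each stored natural number, 2 bits for a counter  *)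
(* tag and 2 bits for the set of bits (subset of {0,1}) recorded by a  *)
(* running counter, 1 + binary length for the (optional) color.        *)

Definition bitlen (v : nat) : nat := (trunc_log 2 v).+1.

Definition counter_mem (c : counter) : nat :=
  match c with
  | Idle => 2
  | Run v _ => 2 + bitlen v + 2
  | Fin v => 2 + bitlen v
  end.

Definition state_mem (x : astate) : nat :=
  4 + counter_mem (cnt_l x) + counter_mem (cnt_r x) +
  (if output x is Some col then 1 + bitlen col else 1).

From mathcomp Require Import all_boot.
From mathcomp Require Import zify.
Set Implicit Arguments. Unset Strict Implicit. Unset Printing Implicit Defensive.

(* The execution is completely determined by n, k and the starting agent s,
   and the proof consists in writing it down in closed form.  With n = N.+1
   agents 0 .. N, the bit 0 leaves s leftwards in round 1 and the bit 1
   rightwards; both bounce off the endpoints and travel back and forth.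
   Every event (an agent waking up, starting or stopping a counter, sending
   a bit) happens in a round that is a linear expression in i, s and N.

   Reading
   off the closed form: after 3 n rounds every agent has halted with output
   i k / n + 1 ([state_at_3n]); each bit is sent by at most one agent per
   round, and only in rounds 1 .. 3 n ([bits_in_round_bound]); counters stay
   below 2 n ([state_mem_bound]). *)

(* Sets of bits, represented as the sublist of [:: false; true] they select. *)
Notation bitset P := [seq b <- [:: false; true] | P b].

Lemma bitset_nil (P : bool -> bool) : (bitset P == [::]) = ~~ P false && ~~ P true.
Proof. by rewrite /=; case: (P false); case: (P true). Qed.
Lemma bitset_mem (P : bool -> bool) x : (x \in bitset P) = P x.
Proof. by rewrite mem_filter; case: x; rewrite !inE /= ?andbT. Qed.
Lemma bitset_has (p P : bool -> bool) : has p (bitset P) = p false && P false || p true && P true.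
Proof. by rewrite /=; case: (P false); case: (P true); rewrite /= ?andbT ?andbF ?orbF. Qed.
Lemma bitset_ext (P Q : bool -> bool) : P false = Q false -> P true = Q true -> bitset P = bitset Q.
Proof. by move=> /= -> ->. Qed.
Lemma bitset_size (P : bool -> bool) : size (bitset P) = P false + P true.
Proof. by rewrite /=; case: (P false); case: (P true). Qed.

Lemma sum_le1_unique m (f : nat -> nat) : (forall i, f i <= 1) ->
  (forall i j, i < m -> j < m -> 0 < f i -> 0 < f j -> i = j) -> \sum_(i < m) f i <= 1.
Proof.
move=> f_le1; elim: m => [|m IH] f_uniq; first by rewrite big_ord0.
rewrite big_ord_recr /=.
case: (posnP (f m)) => Hm.
  by rewrite Hm addn0; apply: IH => i j Hi Hj; apply: f_uniq; apply: ltnW.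
rewrite big1 ?add0n // => i _.
apply/eqP; rewrite -leqn0 leqNgt; apply/negP => Hi.
by have := f_uniq i m (ltnW (ltn_ord i)) (ltnSn m) Hi Hm; move=> /eqP; rewrite ltn_eqF.
Qed.

Lemma sum_active_rounds (f : nat -> nat) M R :
  (forall r, f r <= 2 * ((0 < r) && (r <= M))) -> \sum_(r < R) f r <= 2 * M.
Proof.
move=> Hf.
suff : \sum_(r < R) f r <= 2 * minn R.-1 M.
  by move=> h; apply: leq_trans h _; rewrite leq_mul2l geq_minr orbT.
elim: R => [|R IH]; first by rewrite big_ord0.
rewrite big_ord_recr /=.
have HfR := Hf R.
move: IH HfR; set S := \sum_(i < R) f i; move: S (f R) => S x.
case: R => [|R] /=; first by rewrite min0n muln0 => h1 h2; lia.
case: (leqP R.+1 M) => h /= h1 h2.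
  have e1 : minn R M = R by apply/minn_idPl; apply: ltnW.
  have e2 : minn R.+1 M = R.+1 by apply/minn_idPl.
  rewrite e1 in h1; rewrite ?e2; rewrite muln1 in h2; lia.
have e1 : minn R M = M by apply/minn_idPr.
have e2 : minn R.+1 M = M by apply/minn_idPr; apply: ltnW.
rewrite e1 in h1; rewrite ?e2 ?muln0 in h2 *; lia.
Qed.

Lemma count_andN (P Q : pred nat) s : (forall x, Q x -> P x) ->
  count (fun x => P x && ~~ Q x) s = count P s - count Q s.
Proof.
move=> HQP; elim: s => //= x s IH.
have Hs : count Q s <= count P s by apply: sub_count => y; apply: HQP.
rewrite IH; case EQ: (Q x); first by rewrite (HQP _ EQ) /=; lia.
by case: (P x) => /=; lia.
Qed.

Lemma count_iota_lt q n : count (fun i => i < q) (iota 0 n) = minn q n.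
Proof.
elim: n => [|n IH]; first by rewrite minn0.
by rewrite -addn1 iotaD count_cat IH /= add0n; case: (ltnP n q) => H; lia.
Qed.

(* The coloring i |-> i k / n + 1 of the line 0 .. n-1 is a k-ribbon: the
   agents of color at most m are those with i k < m n, and there are
   ceil(m n / k) of them, so each class has size floor(n/k) or ceil(n/k). *)
Section BalancedRibbon.
Variables (n k : nat).
Hypotheses (Hn : 0 < n) (Hk : 0 < k).

(* The number of agents of color at most m. *)
Definition ribbon_prefix m := (m * n + k.-1) %/ k.

Lemma ribbon_prefix_spec m : m * n <= ribbon_prefix m * k <= m * n + k.-1.
Proof.
rewrite /ribbon_prefix; have := divn_eq (m * n + k.-1) k; have := ltn_pmod (m * n + k.-1) Hk.
set q := _ %/ k; set r := _ %% k; lia.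
Qed.

Lemma count_ribbon_prefix m : m <= k ->
  count (fun i => i * k < m * n) (iota 0 n) = ribbon_prefix m.
Proof.
move=> Hm.
have -> : count (fun i => i * k < m * n) (iota 0 n) =
          count (fun i => i < ribbon_prefix m) (iota 0 n).
  apply: eq_count => i; rewrite /ribbon_prefix (leq_divRL _ _ Hk) mulSn; apply/idP/idP; lia.
rewrite count_iota_lt; apply/minn_idPl.
rewrite /ribbon_prefix -ltnS ltn_divLR //.
have : m * n <= k * n by rewrite leq_mul2r Hm orbT.
rewrite mulSn; lia.
Qed.

Lemma ribbon_prefix_mono m : ribbon_prefix m <= ribbon_prefix m.+1.
Proof. by rewrite /ribbon_prefix leq_div2r // leq_add2r leq_mul2r leqnSn orbT. Qed.

(* The size of the class of color a.+1, which is within 1 of n / k. *)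
Definition ribbon_class a := ribbon_prefix a.+1 - ribbon_prefix a.

Lemma ribbon_class_bounds a : ribbon_class a * k + 1 <= n + k /\ n + 1 <= ribbon_class a * k + k.
Proof.
have := ribbon_prefix_spec a; have := ribbon_prefix_spec a.+1; have := ribbon_prefix_mono a.
rewrite /ribbon_class mulnBl mulSn; set x := ribbon_prefix a; set y := ribbon_prefix a.+1.
move=> h1 h2 h3.
have : x * k <= y * k by rewrite leq_mul2r h1 orbT.
lia.
Qed.

Lemma balanced_is_k_ribbon (c : nat -> nat) :
  (forall i, i < n -> c i = i * k %/ n + 1) -> is_k_ribbon n k c.
Proof.
move=> Hc.
have mono i j : i <= j -> j < n -> c i <= c j.
  move=> Hij Hj; rewrite Hc ?Hc //; last by apply: leq_ltn_trans Hj.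
  by rewrite leq_add2r leq_div2r // leq_mul2r Hij orbT.
split; [|split; [|split]].
- move=> i Hi; rewrite Hc // addn1 ltnS /= ltn_divLR //.
  by rewrite mulnC ltn_pmul2l.
- move=> i j l Hij Hjl Hl Hil.
  have := mono _ _ Hij (leq_ltn_trans Hjl Hl); have := mono _ _ Hjl Hl; lia.
- exact: mono.
- have class_size_E a : 1 <= a <= k -> class_size n c a = ribbon_class a.-1.
    move=> /andP [Ha1 Hak].
    rewrite /class_size.
    have -> : count (fun i => c i == a) (iota 0 n) =
       count (fun i => (i * k < a.-1.+1 * n) && ~~ (i * k < a.-1 * n)) (iota 0 n).
      apply: eq_in_count => i; rewrite mem_iota add0n => /andP [_ Hi].
      rewrite Hc // (prednK Ha1) -(ltn_divLR _ _ Hn) -leqNgt -(leq_divRL _ _ Hn); lia.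
    rewrite count_andN; last first.
      by move=> x /= h; apply: leq_trans h _; rewrite leq_mul2r leqnSn orbT.
    rewrite !count_ribbon_prefix // ?prednK //; last by apply: leq_trans (leq_pred _) Hak.
  move=> a b Ha Hb; rewrite !class_size_E //.
  have [h1 _] := ribbon_class_bounds a.-1; have [_ h2] := ribbon_class_bounds b.-1.
  have : ribbon_class a.-1 * k < (ribbon_class b.-1).+2 * k by rewrite !mulSn; lia.
  by rewrite ltn_pmul2r.
Qed.
End BalancedRibbon.

Section ClosedForm.
Variables (N s k : nat).
Hypothesis Hs : s <= N.

Definition awake_by i r := (i < r + s) && (s < r + i).

(* The round in which agent i (0 < i) starts its left counter, i.e. first
   hears from the right: the bit 0 passing by if i < s, otherwise the bit 1
   coming back from the right endpoint.  Symmetrically for the right counter. *)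
Definition lstart i := if i < s then 1 + s - i else 2 * N + 1 - s - i.
Definition rstart i := if s < i then 1 + i - s else 1 + s + i.

(* [r < lstart i] and [r < lstart i + 2 i] (the starting bit needs 2 i rounds
   to come back from the left endpoint), unfolded into linear constraints;
   symmetrically [r < rstart i] and [r < rstart i + 2 (N - i)]. *)
Definition before_lstart i r :=
  (i < s) && (r + i < 1 + s) || (s <= i) && (r + s + i < 2 * N + 1).
Definition before_lstop i r :=
  (i < s) && (r < 1 + s + i) || (s <= i) && (r + s < 2 * N + 1 + i).
Definition before_rstart i r :=
  (s < i) && (r + s < 1 + i) || (i <= s) && (r < 1 + s + i).
Definition before_rstop i r :=
  (s < i) && (r + s + i < 2 * N + 1) || (i <= s) && (r + i < 2 * N + 1 + s).

Definition sent0_by i r :=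
  (i <= s) && (s + 1 <= r + i) || (s < i) && (2 * N + 1 + s <= r + i).
Definition sent1_by i r :=
  (s <= i) && (i + 1 <= r + s) || (i < s) && (2 * N + 1 + i <= r + s).

Definition halted_by i r :=
  [&& (i == 0) || ~~ before_lstop i r, (i == N) || ~~ before_rstop i r,
      sent0_by i r & sent1_by i r].

(* The bits carried by the message that starts the left (resp. right)
   counter of agent i; a starting endpoint sends both bits at once. *)
Definition lbit i (b : bool) := (s == 0) || (s == N) || (if b then s <= i else i < s).
Definition rbit i (b : bool) := (s == 0) || (s == N) || (if b then s < i else i <= s).
Definition lbits i := [seq b <- [:: false; true] | lbit i b].
Definition rbits i := [seq b <- [:: false; true] | rbit i b].

Definition lcounter i r :=
  if i == 0 then Fin 0 else if before_lstart i r then Idle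
  else if before_lstop i r then Run (r - lstart i) (lbits i) else Fin i.
Definition rcounter i r :=
  if i == N then Fin 0 else if before_rstart i r then Idle
  else if before_rstop i r then Run (r - rstart i) (rbits i) else Fin (N - i).

Definition state_at i r :=
  if (i <= N) && awake_by i r then
    AState true (halted_by i r) (lcounter i r) (rcounter i r)
      (sent0_by i r) (sent1_by i r)
      (if halted_by i r then Some (ribbon_color k i (N - i)) else None)
  else asleep.

(* The bit 1
   leaves s rightwards in round 1 (the bit 0 leftwards; both leave together
   from a starting endpoint), so it is sent rightwards by i in the rounds
   with r + s = i + 1 + 2 j N, j = 0, 1, 2 counting its round trips, and
   leftwards when r + s + i = 2 (j + 1) N + 1; the bit 0 is shifted likewise.
   The bound on r is the round in which it reaches only halted agents. *)
Definition sendsR (b : bool) i r := [&& 0 < r, i < N &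
  if b then ((s == N) && (r + s <= 4*N + 1) || (s != N) && (r + s <= 3*N + 1)) &&
            [|| r + s == i + 1, r + s == i + 2*N + 1 | r + s == i + 4*N + 1]
  else ((s == 0) && (r + 2*N <= 5*N + 1 + s) || (s != 0) && (r + 2*N <= 4*N + 1 + s)) &&
       [|| r + 2*N == i + 1 + s, r + 2*N == i + 2*N + 1 + s | r + 2*N == i + 4*N + 1 + s]].
Definition sendsL (b : bool) i r := [&& 0 < r, 0 < i, i <= N &
  if b then ((s == N) && (r + s <= 4*N + 1) || (s != N) && (r + s <= 3*N + 1)) &&
            [|| r + s + i == 2*N + 1, r + s + i == 4*N + 1 | r + s + i == 6*N + 1]
  else ((s == 0) && (r + 2*N <= 5*N + 1 + s) || (s != 0) && (r + 2*N <= 4*N + 1 + s)) &&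
       [|| r + 2*N + i == 2*N + 1 + s, r + 2*N + i == 4*N + 1 + s | r + 2*N + i == 6*N + 1 + s]].

Definition msgR_at i r := [seq b <- [:: false; true] | sendsR b i r].
Definition msgL_at i r := [seq b <- [:: false; true] | sendsL b i r].
Definition from_left i r := if i is j.+1 then msgR_at j r else [::].
Definition from_right i r := if i.+1 < N.+1 then msgL_at i.+1 r else [::].

Ltac unfold_events := rewrite ?/halted_by /awake_by /before_lstop /before_lstart
  /before_rstop /before_rstart /sent0_by /sent1_by /sendsR /sendsL /lbit /rbit.
(* The equations E0, EN are kept in the context for [lia]. *)
Ltac split_positions i := case: (ltngtP i s) => ? /=;
  case E0: (s == 0) => /=; case EN: (s == N) => /=.
Ltac solve_events i := unfold_events; split_positions i;
  first [apply/idP/idP; lia | lia].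
Ltac solve_bit_events i := unfold_events; case; split_positions i;
  first [apply/idP/idP; lia | lia].

Lemma awake_by_S i r : awake_by i r -> awake_by i r.+1.
Proof. unfold_events; lia. Qed.

Lemma halted_by_awake i r : halted_by i r -> awake_by i r.
Proof. unfold_events; lia. Qed.

Lemma halted_by_S i r : i <= N -> halted_by i r -> halted_by i r.+1.
Proof. unfold_events; lia. Qed.

Lemma single_agent_halted r : N = 0 -> 0 < r -> halted_by 0 r.
Proof. unfold_events; lia. Qed.

Lemma sendsR_S b i r : i <= N -> 0 < r -> sendsR b i r.+1 =
  ~~ halted_by i r && ((i == 0) && ((i < N) && sendsL b i.+1 r)
                       || (i < N) && ((0 < i) && sendsR b i.-1 r)).
Proof. move: b; unfold_events; case=> ? ?; apply/idP/idP; lia. Qed.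

Lemma sendsL_S b i r : i <= N -> 0 < r -> sendsL b i r.+1 =
  ~~ halted_by i r && ((i == N) && ((0 < i) && sendsR b i.-1 r)
                       || (0 < i) && ((i < N) && sendsL b i.+1 r)).
Proof. move: b; unfold_events; case=> ? ?; apply/idP/idP; lia. Qed.

Lemma asleep_silent b i r : i <= N -> 0 < r -> ~~ awake_by i r.+1 ->
  ((0 < i) && sendsR b i.-1 r = false) /\ ((i < N) && sendsL b i.+1 r = false).
Proof. move: b; unfold_events; case; split_positions i; split; lia. Qed.

Lemma woken_by_message i r : i <= N -> 0 < r -> ~~ awake_by i r -> awake_by i r.+1 ->
  (i < s) && ((i < N) && sendsL false i.+1 r) || (s < i) && ((0 < i) && sendsR true i.-1 r).
Proof. solve_events i. Qed.

Section LeftCounterEvents.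
Variables (i r : nat).
Hypotheses (Hi : 0 < i) (HiN : i <= N) (Hr : 0 < r).

Lemma lstart_later_silent b : awake_by i r.+1 -> ~~ halted_by i r -> before_lstart i r.+1 ->
  (i == N) && sendsR b i.-1 r || (i < N) && sendsL b i.+1 r = false.
Proof. move: b; solve_bit_events i. Qed.

Lemma lstart_message b : awake_by i r.+1 -> ~~ halted_by i r ->
  before_lstart i r -> ~~ before_lstart i r.+1 ->
  (i == N) && sendsR b i.-1 r || (i < N) && sendsL b i.+1 r = lbit i b.
Proof. move: b; solve_bit_events i. Qed.

Lemma lstop_message : awake_by i r.+1 -> ~~ halted_by i r ->
  ~~ before_lstart i r -> before_lstop i r ->
  (lbit i false && sendsR false i.-1 r || lbit i true && sendsR true i.-1 r)
  = ~~ before_lstop i r.+1.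
Proof. solve_events i. Qed.
End LeftCounterEvents.

Section RightCounterEvents.
Variables (i r : nat).
Hypotheses (HiN : i < N) (Hr : 0 < r).

Lemma rstart_later_silent b : awake_by i r.+1 -> ~~ halted_by i r -> before_rstart i r.+1 ->
  (i == 0) && sendsL b i.+1 r || (0 < i) && sendsR b i.-1 r = false.
Proof. move: b; solve_bit_events i. Qed.

Lemma rstart_message b : awake_by i r.+1 -> ~~ halted_by i r ->
  before_rstart i r -> ~~ before_rstart i r.+1 ->
  (i == 0) && sendsL b i.+1 r || (0 < i) && sendsR b i.-1 r = rbit i b.
Proof. move: b; solve_bit_events i. Qed.

Lemma rstop_message : awake_by i r.+1 -> ~~ halted_by i r ->
  ~~ before_rstart i r -> before_rstop i r ->
  (rbit i false && sendsL false i.+1 r || rbit i true && sendsL true i.+1 r)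
  = ~~ before_rstop i r.+1.
Proof. solve_events i. Qed.
End RightCounterEvents.

Lemma sent0_by_S i r : i <= N -> 0 < r -> awake_by i r.+1 -> ~~ halted_by i r ->
  ((i == 0) || sent0_by i r) || sendsL false i r.+1 = sent0_by i r.+1.
Proof. solve_events i. Qed.

Lemma sent1_by_S i r : i <= N -> 0 < r -> awake_by i r.+1 -> ~~ halted_by i r ->
  ((i == N) || sent1_by i r) || sendsR true i r.+1 = sent1_by i r.+1.
Proof. solve_events i. Qed.

(* Monotonicity of the counter phases and the value of a running counter:
   it is 0 in round [lstart i] and reaches 2 i - 1 just before stopping, so
   the halved final value is i; symmetrically N - i on the right. *)
Ltac unfold_counter := rewrite /before_lstop /before_lstart /before_rstop
  /before_rstart /lstart /rstart.

Section LeftCounterValues.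
Variables (i r : nat).
Hypotheses (Hi : 0 < i) (HiN : i <= N).

Lemma before_lstart_S : before_lstart i r.+1 -> before_lstart i r.
Proof. unfold_counter; lia. Qed.
Lemma before_lstop_S : before_lstop i r.+1 -> before_lstop i r.
Proof. unfold_counter; lia. Qed.
Lemma before_lstart_lstop : before_lstart i r -> before_lstop i r.
Proof. unfold_counter; lia. Qed.
Lemma before_lstart_lstopS : before_lstart i r -> before_lstop i r.+1.
Proof. unfold_counter; lia. Qed.
Lemma lcount_start : before_lstart i r -> ~~ before_lstart i r.+1 -> r.+1 - lstart i = 0.
Proof. unfold_counter; case: ifP; lia. Qed.
Lemma lcount_S : ~~ before_lstart i r -> (r - lstart i).+1 = r.+1 - lstart i.
Proof. unfold_counter; case: ifP; lia. Qed.
Lemma lcount_stop : ~~ before_lstart i r -> before_lstop i r -> ~~ before_lstop i r.+1 ->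
  ((r - lstart i).+1)./2 = i.
Proof. unfold_counter; case: ifP; lia. Qed.
Lemma lcount_bound : ~~ before_lstart i r -> before_lstop i r -> r - lstart i < 2 * N.+1.
Proof. unfold_counter; case: ifP; lia. Qed.
End LeftCounterValues.

Section RightCounterValues.
Variables (i r : nat).
Hypothesis (HiN : i < N).

Lemma before_rstart_S : before_rstart i r.+1 -> before_rstart i r.
Proof. unfold_counter; lia. Qed.
Lemma before_rstop_S : before_rstop i r.+1 -> before_rstop i r.
Proof. unfold_counter; lia. Qed.
Lemma before_rstart_rstop : before_rstart i r -> before_rstop i r.
Proof. unfold_counter; lia. Qed.
Lemma before_rstart_rstopS : before_rstart i r -> before_rstop i r.+1.
Proof. unfold_counter; lia. Qed.
Lemma rcount_start : before_rstart i r -> ~~ before_rstart i r.+1 -> r.+1 - rstart i = 0.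
Proof. unfold_counter; case: ifP; lia. Qed.
Lemma rcount_S : ~~ before_rstart i r -> (r - rstart i).+1 = r.+1 - rstart i.
Proof. unfold_counter; case: ifP; lia. Qed.
Lemma rcount_stop : ~~ before_rstart i r -> before_rstop i r -> ~~ before_rstop i r.+1 ->
  ((r - rstart i).+1)./2 = N - i.
Proof. unfold_counter; case: ifP; lia. Qed.
Lemma rcount_bound : ~~ before_rstart i r -> before_rstop i r -> r - rstart i < 2 * N.+1.
Proof. unfold_counter; case: ifP; lia. Qed.
End RightCounterValues.

Lemma awake_left_end_sent0 i r : awake_by i r -> i == 0 -> sent0_by i r.
Proof. unfold_events; lia. Qed.
Lemma awake_right_end_sent1 i r : i <= N -> awake_by i r -> i == N -> sent1_by i r.
Proof. unfold_events; lia. Qed.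
Lemma asleep_before_lstart i r : 0 < i -> i <= N -> ~~ awake_by i r -> before_lstart i r.
Proof. unfold_events; lia. Qed.
Lemma asleep_before_rstart i r : i < N -> ~~ awake_by i r -> before_rstart i r.
Proof. unfold_events; lia. Qed.
Lemma asleep_not_sent0 i r : i <= N -> ~~ awake_by i r -> sent0_by i r = false.
Proof. unfold_events; lia. Qed.
Lemma asleep_not_sent1 i r : i <= N -> ~~ awake_by i r -> sent1_by i r = false.
Proof. unfold_events; lia. Qed.
Lemma lbits_nonempty i : lbit i false || lbit i true.
Proof. rewrite /lbit; lia. Qed.
Lemma rbits_nonempty i : rbit i false || rbit i true.
Proof. rewrite /rbit; lia. Qed.


Lemma from_left_E i r : from_left i r = bitset (fun b => (0 < i) && sendsR b i.-1 r).
Proof. by case: i. Qed.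
Lemma from_right_E i r : from_right i r = bitset (fun b => (i < N) && sendsL b i.+1 r).
Proof. by rewrite /from_right ltnS; case: ifP. Qed.

Lemma lcounter_fin i r : i <= N -> (i == 0) || ~~ before_lstop i r -> lcounter i r = Fin i.
Proof.
move=> HiN; rewrite /lcounter; case: ifP => [/eqP -> //|Hi0] /= Hz.
have Hi : 0 < i by rewrite lt0n Hi0.
have -> : before_lstart i r = false.
  by apply/negbTE; apply: contra Hz; exact: before_lstart_lstop.
by rewrite (negbTE Hz).
Qed.
Lemma rcounter_fin i r : i <= N -> (i == N) || ~~ before_rstop i r -> rcounter i r = Fin (N - i).
Proof.
move=> HiN; rewrite /rcounter; case: ifP => [/eqP -> //|HiN'] /= Hz; first by rewrite subnn.
have Hi : i < N by rewrite ltn_neqAle HiN' HiN.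
have -> : before_rstart i r = false.
  by apply/negbTE; apply: contra Hz; exact: before_rstart_rstop.
by rewrite (negbTE Hz).
Qed.

Lemma is_fin_lcounter i r : i <= N ->
  is_fin (lcounter i r) = if (i == 0) || ~~ before_lstop i r then Some i else None.
Proof.
move=> HiN; case: ifP => H; first by rewrite lcounter_fin.
move: H; rewrite /lcounter; case: ifP => //= Hi0 /negbFE Hz.
by case: ifP => //; rewrite Hz.
Qed.
Lemma is_fin_rcounter i r : i <= N ->
  is_fin (rcounter i r) = if (i == N) || ~~ before_rstop i r then Some (N - i) else None.
Proof.
move=> HiN; case: ifP => H; first by rewrite rcounter_fin.
move: H; rewrite /rcounter; case: ifP => //= Hi0 /negbFE Hz.
by case: ifP => //; rewrite Hz.
Qed.

Lemma try_halt_closed_form i r : i <= N -> awake_by i r ->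
  try_halt k (AState true false (lcounter i r) (rcounter i r)
                     (sent0_by i r) (sent1_by i r) None) = state_at i r.
Proof.
move=> HiN Ha; rewrite /state_at HiN Ha /= /try_halt /= is_fin_lcounter // is_fin_rcounter //.
rewrite /halted_by.
case: ifP => H1 /=; last by []. case: ifP => H2 /=; last by [].
by rewrite andbT; case: (sent0_by i r && sent1_by i r).
Qed.

Lemma halted_state_at i r : halted (state_at i r) = (i <= N) && awake_by i r && halted_by i r.
Proof. by rewrite /state_at; case: ifP. Qed.
Lemma awake_state_at i r : awake (state_at i r) = (i <= N) && awake_by i r.
Proof. by rewrite /state_at; case: ifP. Qed.

Lemma state_at_halted i r : i <= N -> halted_by i r -> state_at i r =
  AState true true (Fin i) (Fin (N - i)) true true (Some (ribbon_color k i (N - i))).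
Proof.
move=> HiN H; have Ha := halted_by_awake H.
rewrite /state_at HiN Ha H /=.
move: H; rewrite /halted_by => /and4P [h1 h2 h3 h4].
by rewrite lcounter_fin // rcounter_fin // h3 h4.
Qed.

Lemma wake_state_at i r : i <= N -> ~~ halted_by i r ->
  wake (i == 0) (i == N) (state_at i r) =
  AState true false (lcounter i r) (rcounter i r)
    ((i == 0) || sent0_by i r) ((i == N) || sent1_by i r) None.
Proof.
move=> HiN Hh; rewrite /state_at HiN /=; case: ifP => Ha /=.
  rewrite (negbTE Hh).
  have -> : (i == 0) || sent0_by i r = sent0_by i r.
    by case E: (i == 0) => //=; rewrite (awake_left_end_sent0 Ha E).
  have -> : (i == N) || sent1_by i r = sent1_by i r.
    by case E: (i == N) => //=; rewrite (awake_right_end_sent1 HiN Ha E).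
  by [].
have Ha' : ~~ awake_by i r by rewrite Ha.
rewrite (asleep_not_sent0 HiN Ha') (asleep_not_sent1 HiN Ha') !orbF.
congr AState.
  rewrite /lcounter; case: ifP => // Hi0.
  by rewrite asleep_before_lstart // lt0n Hi0.
rewrite /rcounter; case: ifP => // HiN'.
by rewrite asleep_before_rstart // ltn_neqAle HiN' HiN.
Qed.

Lemma lcounter_S i r : 0 < i -> i <= N -> 0 < r -> awake_by i r.+1 -> ~~ halted_by i r ->
  start_if (bitset (fun b => (i == N) && sendsR b i.-1 r || (i < N) && sendsL b i.+1 r))
     (stop_if (from_left i r) (tick (lcounter i r))) = lcounter i r.+1.
Proof.
move=> Hi HiN Hr Ha Hh.
have Hi0 : (i == 0) = false by rewrite eqn0Ngt Hi.
rewrite from_left_E Hi.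
case: (boolP (before_lstart i r.+1)) => H1.
  have H0 := before_lstart_S Hi HiN H1.
  rewrite (bitset_ext (Q := fun _ => false)) ?(lstart_later_silent Hi HiN Hr _ Ha Hh H1) //.
  by rewrite /lcounter Hi0 H0 H1.
case: (boolP (before_lstart i r)) => H0.
  rewrite (bitset_ext (Q := lbit i)) ?(lstart_message Hi HiN Hr _ Ha Hh H0 H1) //.
  have Hne : (bitset (lbit i) == [::]) = false.
    by rewrite bitset_nil; case/orP: (lbits_nonempty i) => ->; rewrite ?andbF.
  rewrite /lcounter Hi0 H0 (negbTE H1) (before_lstart_lstopS Hi HiN H0).
  by rewrite (lcount_start Hi HiN H0 H1) /start_if Hne.
case: (boolP (before_lstop i r)) => Hz.
  have Hstop : has (fun x => x \in lbits i) (bitset (fun b => true && sendsR b i.-1 r))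
             = ~~ before_lstop i r.+1.
    by rewrite /lbits bitset_has !bitset_mem /=; exact: lstop_message.
  rewrite /lcounter Hi0 (negbTE H0) (negbTE H1) Hz /tick /stop_if Hstop.
  case: (boolP (before_lstop i r.+1)) => Hz1 /=; first by rewrite lcount_S.
  by move: (lcount_stop Hi HiN H0 Hz Hz1) => /= ->.
have Hz1 : ~~ before_lstop i r.+1 by apply: contra Hz; exact: before_lstop_S.
by rewrite /lcounter Hi0 (negbTE H0) (negbTE H1) (negbTE Hz) (negbTE Hz1).
Qed.

Lemma rcounter_S i r : i < N -> 0 < r -> awake_by i r.+1 -> ~~ halted_by i r ->
  start_if (bitset (fun b => (i == 0) && sendsL b i.+1 r || (0 < i) && sendsR b i.-1 r))
     (stop_if (from_right i r) (tick (rcounter i r))) = rcounter i r.+1.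
Proof.
move=> Hi Hr Ha Hh.
have HiN : (i == N) = false by rewrite ltn_eqF.
rewrite from_right_E Hi.
case: (boolP (before_rstart i r.+1)) => H1.
  have H0 := before_rstart_S Hi H1.
  rewrite (bitset_ext (Q := fun _ => false)) ?(rstart_later_silent Hi Hr _ Ha Hh H1) //.
  by rewrite /rcounter HiN H0 H1.
case: (boolP (before_rstart i r)) => H0.
  rewrite (bitset_ext (Q := rbit i)) ?(rstart_message Hi Hr _ Ha Hh H0 H1) //.
  have Hne : (bitset (rbit i) == [::]) = false.
    by rewrite bitset_nil; case/orP: (rbits_nonempty i) => ->; rewrite ?andbF.
  rewrite /rcounter HiN H0 (negbTE H1) (before_rstart_rstopS Hi H0).
  by rewrite (rcount_start Hi H0 H1) /start_if Hne.
case: (boolP (before_rstop i r)) => Hz.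
  have Hstop : has (fun x => x \in rbits i) (bitset (fun b => true && sendsL b i.+1 r))
             = ~~ before_rstop i r.+1.
    by rewrite /rbits bitset_has !bitset_mem /=; exact: rstop_message.
  rewrite /rcounter HiN (negbTE H0) (negbTE H1) Hz /tick /stop_if Hstop.
  case: (boolP (before_rstop i r.+1)) => Hz1 /=; first by rewrite (rcount_S Hi).
  by move: (rcount_stop Hi H0 Hz Hz1) => /= ->.
have Hz1 : ~~ before_rstop i r.+1 by apply: contra Hz; exact: before_rstop_S.
by rewrite /rcounter HiN (negbTE H0) (negbTE H1) (negbTE Hz) (negbTE Hz1).
Qed.

Lemma msgR_at_S i r : i <= N -> 0 < r -> msgR_at i r.+1 =
  bitset (fun b => ~~ halted_by i r && ((i == 0) && ((i < N) && sendsL b i.+1 r)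
                                        || (i < N) && ((0 < i) && sendsR b i.-1 r))).
Proof. by move=> HiN Hr; apply: eq_filter => b; exact: sendsR_S. Qed.
Lemma msgL_at_S i r : i <= N -> 0 < r -> msgL_at i r.+1 =
  bitset (fun b => ~~ halted_by i r && ((i == N) && ((0 < i) && sendsR b i.-1 r)
                                        || (0 < i) && ((i < N) && sendsL b i.+1 r))).
Proof. by move=> HiN Hr; apply: eq_filter => b; exact: sendsL_S. Qed.

Lemma step_halted i r : i <= N -> 0 < r -> halted_by i r ->
  step_agent (i == 0) (i == N) k (state_at i r) (from_left i r) (from_right i r)
  = (state_at i r.+1, msgL_at i r.+1, msgR_at i r.+1).
Proof.
move=> HiN Hr Hh.
rewrite /step_agent halted_state_at HiN (halted_by_awake Hh) Hh /=.
rewrite (state_at_halted HiN Hh) (state_at_halted HiN (halted_by_S HiN Hh)).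
by rewrite msgR_at_S // msgL_at_S // Hh.
Qed.

Lemma step_asleep i r : i <= N -> 0 < r -> ~~ awake_by i r.+1 ->
  step_agent (i == 0) (i == N) k (state_at i r) (from_left i r) (from_right i r)
  = (state_at i r.+1, msgL_at i r.+1, msgR_at i r.+1).
Proof.
move=> HiN Hr Ha.
have Ha0 : ~~ awake_by i r by apply: contra Ha; exact: awake_by_S.
have -> : state_at i r = asleep by rewrite /state_at HiN (negbTE Ha0).
have -> : state_at i r.+1 = asleep by rewrite /state_at HiN (negbTE Ha).
have from_left0 b := (asleep_silent b HiN Hr Ha).1.
have from_right0 b := (asleep_silent b HiN Hr Ha).2.
have -> : msgL_at i r.+1 = [::].
  by rewrite msgL_at_S //; apply/eqP; rewrite bitset_nil ?from_left0 ?from_right0 ?andbF ?orbF.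
have -> : msgR_at i r.+1 = [::].
  by rewrite msgR_at_S //; apply/eqP; rewrite bitset_nil ?from_left0 ?from_right0 ?andbF ?orbF.
have -> : from_left i r = [::] by rewrite from_left_E; apply/eqP; rewrite bitset_nil ?from_left0.
have -> : from_right i r = [::] by rewrite from_right_E; apply/eqP; rewrite bitset_nil ?from_right0.
by [].
Qed.

Lemma step_active i r : i <= N -> 0 < r -> awake_by i r.+1 -> ~~ halted_by i r ->
  step_agent (i == 0) (i == N) k (state_at i r) (from_left i r) (from_right i r)
  = step_agent (i == 0) (i == N) k
      (AState true false (lcounter i r) (rcounter i r)
         ((i == 0) || sent0_by i r) ((i == N) || sent1_by i r) None)
      (from_left i r) (from_right i r).
Proof.
move=> HiN Hr Ha Hh.
have woken : ~~ awake (state_at i r) && (from_left i r == [::]) && (from_right i r == [::]) = false.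
  rewrite awake_state_at HiN /=; case: (boolP (awake_by i r)) => Ha0 //=.
  have := woken_by_message HiN Hr Ha0 Ha; rewrite from_left_E from_right_E !bitset_nil.
  by case/orP => /andP [_ ->]; rewrite ?andbF.
by rewrite /step_agent halted_state_at (negbTE Hh) andbF woken (wake_state_at HiN Hh).
Qed.

Lemma step_result i r cl cr x y toL toR : i <= N -> awake_by i r.+1 ->
  cl = lcounter i r.+1 -> cr = rcounter i r.+1 -> x = sent0_by i r.+1 -> y = sent1_by i r.+1 ->
  toL = msgL_at i r.+1 -> toR = msgR_at i r.+1 ->
  (try_halt k (AState true false cl cr x y None), toL, toR)
  = (state_at i r.+1, msgL_at i r.+1, msgR_at i r.+1).
Proof. by move=> HiN Ha -> -> -> -> -> ->; rewrite try_halt_closed_form. Qed.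

Lemma step_left_end i r : i == 0 -> i < N -> 0 < r -> awake_by i r.+1 -> ~~ halted_by i r ->
  step_agent (i == 0) (i == N) k (state_at i r) (from_left i r) (from_right i r)
  = (state_at i r.+1, msgL_at i r.+1, msgR_at i r.+1).
Proof.
move=> E0 Hi' Hr Ha Hh; have HiN := ltnW Hi'.
have EN : (i == N) = false by rewrite ltn_eqF.
have Hi0 : (0 < i) = false by rewrite lt0n E0.
have bounced : from_right i r = msgR_at i r.+1.
  by rewrite msgR_at_S // from_right_E; apply: bitset_ext; rewrite E0 (negbTE Hh) Hi' Hi0 /= ?andbF ?orbF.
have silent_left : [::] = msgL_at i r.+1.
  by rewrite msgL_at_S //; symmetry; apply/eqP; rewrite bitset_nil Hi0 EN /= ?andbF.
rewrite step_active // /step_agent E0 EN /=; apply: step_result => //.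
- by rewrite /lcounter E0.
- rewrite -(rcounter_S Hi' Hr Ha Hh); congr start_if.
  by rewrite from_right_E; apply: bitset_ext; rewrite E0 Hi' Hi0 /= ?orbF.
- by rewrite -(sent0_by_S HiN Hr Ha Hh) E0.
- by rewrite -(sent1_by_S HiN Hr Ha Hh) EN /= bounced /msgR_at bitset_mem.
Qed.

Lemma step_right_end i r : i == N -> 0 < i -> 0 < r -> awake_by i r.+1 -> ~~ halted_by i r ->
  step_agent (i == 0) (i == N) k (state_at i r) (from_left i r) (from_right i r)
  = (state_at i r.+1, msgL_at i r.+1, msgR_at i r.+1).
Proof.
move=> EN Hi Hr Ha Hh; have HiN : i <= N by rewrite (eqP EN).
have E0 : (i == 0) = false by rewrite eqn0Ngt Hi.
have Hi' : (i < N) = false by rewrite (eqP EN) ltnn.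
have bounced : from_left i r = msgL_at i r.+1.
  by rewrite msgL_at_S // from_left_E; apply: bitset_ext; rewrite EN (negbTE Hh) Hi' Hi /= ?andbF ?orbF.
have silent_right : [::] = msgR_at i r.+1.
  by rewrite msgR_at_S //; symmetry; apply/eqP; rewrite bitset_nil Hi' E0 /= ?andbF.
rewrite step_active // /step_agent E0 EN /=; apply: step_result => //.
- rewrite -(lcounter_S Hi HiN Hr Ha Hh); congr start_if.
  by rewrite from_left_E; apply: bitset_ext; rewrite EN Hi' Hi /= ?orbF.
- by rewrite /rcounter EN.
- by rewrite -(sent0_by_S HiN Hr Ha Hh) E0 /= bounced /msgL_at bitset_mem.
- by rewrite -(sent1_by_S HiN Hr Ha Hh) EN.
Qed.

Lemma step_interior i r : 0 < i -> i < N -> 0 < r -> awake_by i r.+1 -> ~~ halted_by i r ->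
  step_agent (i == 0) (i == N) k (state_at i r) (from_left i r) (from_right i r)
  = (state_at i r.+1, msgL_at i r.+1, msgR_at i r.+1).
Proof.
move=> Hi Hi' Hr Ha Hh; have HiN := ltnW Hi'.
have E0 : (i == 0) = false by rewrite eqn0Ngt Hi.
have EN : (i == N) = false by rewrite ltn_eqF.
have forward_left : from_right i r = msgL_at i r.+1.
  by rewrite msgL_at_S // from_right_E; apply: bitset_ext; rewrite EN (negbTE Hh) Hi' Hi /= ?andbF ?orbF.
have forward_right : from_left i r = msgR_at i r.+1.
  by rewrite msgR_at_S // from_left_E; apply: bitset_ext; rewrite E0 (negbTE Hh) Hi' Hi /= ?andbF ?orbF.
rewrite step_active // /step_agent E0 EN /=; apply: step_result => //.
- rewrite -(lcounter_S Hi HiN Hr Ha Hh); congr start_if.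
  by rewrite from_right_E; apply: bitset_ext; rewrite EN Hi' /= ?orbF.
- rewrite -(rcounter_S Hi' Hr Ha Hh); congr start_if.
  by rewrite from_left_E; apply: bitset_ext; rewrite E0 Hi /= ?orbF.
- by rewrite -(sent0_by_S HiN Hr Ha Hh) E0 /= forward_left /msgL_at bitset_mem.
- by rewrite -(sent1_by_S HiN Hr Ha Hh) EN /= forward_right /msgR_at bitset_mem.
Qed.

Lemma step_closed_form i r : i <= N -> 0 < r ->
  step_agent (i == 0) (i == N) k (state_at i r) (from_left i r) (from_right i r)
  = (state_at i r.+1, msgL_at i r.+1, msgR_at i r.+1).
Proof.
move=> HiN Hr.
case: (boolP (halted_by i r)) => Hh; first exact: step_halted.
case: (boolP (awake_by i r.+1)) => Ha; last exact: step_asleep.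
have [Hi0|Hi] : i == 0 \/ 0 < i by rewrite lt0n; case: (i == 0); [left|right].
  have [HiN'|HN0] : i < N \/ N = 0 by lia.
    exact: step_left_end.
  by move: Hh; rewrite (eqP Hi0) single_agent_halted.
have [HiN'|HiN'] : i < N \/ i == N by lia.
- exact: step_interior.
- exact: step_right_end.
Qed.

Lemma sendsL_1 b i : sendsL b i 1 = (i == s) && (0 < s) && (~~ b || (s == N)).
Proof. rewrite /sendsL; case: b; apply/idP/idP; lia. Qed.
Lemma sendsR_1 b i : sendsR b i 1 = (i == s) && (s < N) && (b || (s == 0)).
Proof. rewrite /sendsR; case: b; apply/idP/idP; lia. Qed.
Lemma awake_by_1 i : awake_by i 1 = (i == s).
Proof. rewrite /awake_by; apply/idP/idP; lia. Qed.

Lemma lcounter_start : lcounter s 1 =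
  if s == 0 then Fin 0 else if s == N then Run 0 [:: false; true] else Idle.
Proof.
rewrite /lcounter; case: ifP => E0 //; case EN: (s == N).
  have -> : before_lstart s 1 = false by rewrite /before_lstart; lia.
  have -> : before_lstop s 1 = true by rewrite /before_lstop; lia.
  have -> : 1 - lstart s = 0 by rewrite /lstart; case: ifP; lia.
  by rewrite /lbits /lbit EN orbT.
by have -> : before_lstart s 1 = true by rewrite /before_lstart; lia.
Qed.
Lemma rcounter_start : rcounter s 1 =
  if s == N then Fin 0 else if s == 0 then Run 0 [:: false; true] else Idle.
Proof.
rewrite /rcounter; case: ifP => EN //; case E0: (s == 0).
  have -> : before_rstart s 1 = false by rewrite /before_rstart; lia.
  have -> : before_rstop s 1 = true by rewrite /before_rstop; lia.
  have -> : 1 - rstart s = 0 by rewrite /rstart; case: ifP; lia.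
  by rewrite /rbits /rbit E0.
by have -> : before_rstart s 1 = true by rewrite /before_rstart; lia.
Qed.

Lemma init_closed_form i :
  [/\ st (init_config N.+1 k s) i = state_at i 1,
      msgL (init_config N.+1 k s) i = msgL_at i 1 &
      msgR (init_config N.+1 k s) i = msgR_at i 1].
Proof.
have -> : msgL_at i 1 = bitset (fun b => (i == s) && (0 < s) && (~~ b || (s == N))).
  by apply: eq_filter => b; rewrite sendsL_1.
have -> : msgR_at i 1 = bitset (fun b => (i == s) && (s < N) && (b || (s == 0))).
  by apply: eq_filter => b; rewrite sendsR_1.
rewrite /init_config /=.
case: eqP => [->|Hne] /=; last by rewrite /state_at awake_by_1 (introF eqP Hne) andbF.
have Ha : awake_by s 1 by rewrite awake_by_1.
have sent0 : sent0_by s 1 by rewrite /sent0_by; lia.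
have sent1 : sent1_by s 1 by rewrite /sent1_by; lia.
rewrite -(try_halt_closed_form Hs Ha) sent0 sent1 /start_agent lcounter_start rcounter_start.
have -> : (s < N) = (s != N) by rewrite ltn_neqAle Hs andbT.
by rewrite lt0n; case: (s == 0); case: (s == N).
Qed.

Lemma after_round_closed_form r : 0 < r -> forall i, i <= N ->
  [/\ st (after_round N.+1 k s r) i = state_at i r,
      msgL (after_round N.+1 k s r) i = msgL_at i r &
      msgR (after_round N.+1 k s r) i = msgR_at i r].
Proof.
elim: r => // r IH _ i HiN.
case: r IH => [|r] IH; first exact: init_closed_form.
have {}IH := IH (ltn0Sn r).
have -> : after_round N.+1 k s r.+2 = next_config N.+1 k (after_round N.+1 k s r.+1) by [].
set c := after_round N.+1 k s r.+1.
have [state_i _ _] := IH i HiN.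
have recv_left : (if i is j.+1 then msgR c j else [::]) = from_left i r.+1.
  by case: i HiN {state_i} => // j HjN; have [_ _ ->] := IH j (ltnW HjN).
have recv_right : (if i.+1 < N.+1 then msgL c i.+1 else [::]) = from_right i r.+1.
  by rewrite /from_right; case: ifP => // Hi; have [_ -> _] := IH i.+1 Hi.
by rewrite /next_config /= state_i recv_left recv_right step_closed_form.
Qed.

Lemma halted_by_3n i : i <= N -> awake_by i (3 * N.+1) && halted_by i (3 * N.+1).
Proof. unfold_events; lia. Qed.

Lemma ribbon_color_line i : i <= N -> ribbon_color k i (N - i) = i * k %/ N.+1 + 1.
Proof. by move=> HiN; rewrite /ribbon_color subnKC // [N + 1]addn1. Qed.

Lemma state_at_3n i : i <= N -> state_at i (3 * N.+1) =
  AState true true (Fin i) (Fin (N - i)) true true (Some (i * k %/ N.+1 + 1)).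
Proof.
move=> HiN; have /andP [_ Hh] := halted_by_3n HiN.
by rewrite state_at_halted // ribbon_color_line.
Qed.

Definition sends b i r : nat := sendsL b i r + sendsR b i r.

Lemma sends_le1 b i r : sends b i r <= 1.
Proof.
rewrite /sends; case Li: (sendsL b i r); case Ri: (sendsR b i r) => //=.
by move: Li Ri; rewrite /sendsL /sendsR; case: b => /=; lia.
Qed.

Lemma sendsL_unique b i j r : sendsL b i r -> sendsL b j r -> i = j.
Proof. rewrite /sendsL; case: b => /=; lia. Qed.
Lemma sendsR_unique b i j r : sendsR b i r -> sendsR b j r -> i = j.
Proof. rewrite /sendsR; case: b => /=; lia. Qed.
Lemma sendsLR_unique b i j r : sendsL b i r -> sendsR b j r -> i = j.
Proof. rewrite /sendsL /sendsR; case: b => /=; lia. Qed.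

Lemma sends_unique b i j r : 0 < sends b i r -> 0 < sends b j r -> i = j.
Proof.
rewrite /sends; case Li: (sendsL b i r); case Ri: (sendsR b i r) => //= _;
case Lj: (sendsL b j r); case Rj: (sendsR b j r) => //= _.
all: first [ exact: (sendsL_unique Li Lj) | exact: (sendsR_unique Ri Rj)
           | exact: (sendsLR_unique Li Rj) | symmetry; exact: (sendsLR_unique Lj Ri)].
Qed.

Lemma sends_late b i r : 3 * N.+1 < r -> sends b i r = 0.
Proof. by rewrite /sends /sendsL /sendsR; case: b => ?; apply/eqP; rewrite addn_eq0; lia. Qed.

Lemma sends_in_round b r : \sum_(i < N.+1) sends b i r <= (r <= 3 * N.+1).
Proof.
case: (leqP r (3 * N.+1)) => Hr.
  apply: leq_trans (sum_le1_unique (fun i => sends_le1 b i r) _) _ => //.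
  by move=> i j _ _; apply: sends_unique.
by rewrite big1 // => i _; rewrite sends_late.
Qed.

Lemma bits_in_round_bound r : bits_in_round N.+1 k s r <= 2 * ((0 < r) && (r <= 3 * N.+1)).
Proof.
case: r => [|r]; first by rewrite /bits_in_round big1.
have -> : bits_in_round N.+1 k s r.+1
          = \sum_(i < N.+1) sends false i r.+1 + \sum_(i < N.+1) sends true i r.+1.
  rewrite /bits_in_round -big_split /=; apply: eq_bigr => i _.
  have [_ -> ->] := after_round_closed_form (ltn0Sn r) (ltn_ord i : i <= N).
  rewrite /msgL_at /msgR_at /sends !bitset_size; lia.
have := sends_in_round false r.+1; have := sends_in_round true r.+1; rewrite /=; lia.
Qed.

Definition counter_below (m : nat) (c : counter) : bool :=
  match c with Idle => true | Run v _ => v < m.*2 | Fin v => v <= m end.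

Lemma counter_mem_below m c : 0 < m -> counter_below m c ->
  counter_mem c <= 6 + trunc_log 2 m.
Proof.
move=> Hm; have := trunc_log2_double Hm.
case: c => [|v B|v] /= Hd Hv; rewrite /bitlen; first lia.
- have := leq_trunc_log 2 (ltnW Hv); lia.
- have := leq_trunc_log 2 Hv; lia.
Qed.

Lemma lcounter_below i r : i <= N -> counter_below N.+1 (lcounter i r).
Proof.
move=> HiN; rewrite /lcounter; case: ifP => [//|Hi0].
have Hi : 0 < i by rewrite lt0n Hi0.
case: ifP => [//|Hl]; case: ifP => Hz /=; last by apply: ltnW.
by rewrite -mul2n lcount_bound // Hl.
Qed.

Lemma rcounter_below i r : i <= N -> counter_below N.+1 (rcounter i r).
Proof.
move=> HiN; rewrite /rcounter; case: ifP => [//|HiN'].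
have Hi : i < N by rewrite ltn_neqAle HiN' HiN.
case: ifP => [//|Hl]; case: ifP => Hz /=; last by apply: leq_trans (leq_subr i N) _.
by rewrite -mul2n rcount_bound // Hl.
Qed.

Lemma state_mem_bound i r : 0 < k ->
  state_mem (state_at i r) <= 2 * trunc_log 2 N.+1 + trunc_log 2 k + 20.
Proof.
move=> Hk; rewrite /state_at; case: ifP => [/andP [HiN Ha]|_]; last by rewrite /state_mem /=; lia.
rewrite /state_mem /=.
have Hl := counter_mem_below (ltn0Sn N) (lcounter_below r HiN).
have Hr := counter_mem_below (ltn0Sn N) (rcounter_below r HiN).
case: ifP => _; last lia.
have Hc : ribbon_color k i (N - i) <= k.
  by rewrite ribbon_color_line // addn1 ltn_divLR // mulnC ltn_pmul2l.
have := leq_trunc_log 2 Hc; rewrite /bitlen; lia.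
Qed.

End ClosedForm.

Theorem theorem4 :
  exists C : nat,
  forall n k s : nat, 0 < n -> 0 < k -> s < n ->
    let final := after_round n k s (3 * n) in
    [/\ (* every agent has decided and halted within 3n rounds ... *)
        (forall i, i < n -> halted (st final i)),
        (* ... and the decided colors form a k-ribbon, *)
        is_k_ribbon n k (fun i => odflt 0 (output (st final i))),
        (* at most 6n message bits are sent in total, *)
        (forall R, \sum_(r < R) bits_in_round n k s r <= 6 * n) &
        (* each agent uses 2 log n + log k + O(1) bits of memory, always *)
        (forall r i, i < n ->
           state_mem (st (after_round n k s r) i)
             <= 2 * trunc_log 2 n + trunc_log 2 k + C)].
Proof.
exists 20 => n k s Hn Hk Hsn final; rewrite /final {final}.
case: n Hn Hsn => [//|N] _; rewrite ltnS => Hs.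
have round3n : 0 < 3 * N.+1 by [].
have final_state i : i <= N -> st (after_round N.+1 k s (3 * N.+1)) i =
    AState true true (Fin i) (Fin (N - i)) true true (Some (i * k %/ N.+1 + 1)).
  move=> HiN; have [-> _ _] := after_round_closed_form k Hs round3n HiN.
  by rewrite state_at_3n.
split.
- by move=> i; rewrite ltnS => HiN; rewrite final_state.
- by apply: balanced_is_k_ribbon => // i; rewrite ltnS => HiN; rewrite final_state.
- move=> R; rewrite (_ : 6 * N.+1 = 2 * (3 * N.+1)); last by rewrite mulnA.
  by apply: sum_active_rounds => r; apply: bits_in_round_bound.
- move=> [|r] i; first by rewrite /state_mem /=; lia.
  rewrite ltnS => HiN; have [-> _ _] := after_round_closed_form k Hs (ltn0Sn r) HiN.
  exact: state_mem_bound.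
Qed.
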